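(* Let $A=\mathbb{Z}_2^n\times\mathbb{Z}_4\times A_{2'}$, where $n\ge 1$ and $A_{2'}$ is a finite abelian group of odd order. Then a subgroup $H$ of $A$ is a subgroup perfect code of $A$ if and only if $H$ is neither of the form $\{0\}^n\times\{0,2\}\times A'$ with $A'$ a proper subgroup of $A_{2'}$, nor of the form $\{0\}^n\times\{0\}\times A''$ with $A''$ a subgroup of $A_{2'}$.
   Context: Groups are written additively with identity $0$. An element $x\in A$ is a square if $x=2y$ for some $y\in A$; a subset is square-free if it contains no squares. For a square-free $T\subseteq A$, the Cayley sum graph $\mathrm{CayS}(A,T)$ is the simple graph with vertex set $A$ in which distinct $x,y$ are adjacent iff $x+y\in T$. A subset $C$ of the vertex set of a graph is a perfect code if every vertex is at distance at most one from exactly one vertex of $C$. A subgroup $H$ of $A$ is a subgroup perfect code of $A$ if $H$ is a perfect code of $\mathrm{CayS}(A,T)$ for some square-free $T\subseteq A$ (the empty set allowed). *)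

From HB Require Import structures.
From mathcomp Require Import all_boot all_order all_algebra.
Set Implicit Arguments. Unset Strict Implicit. Unset Printing Implicit Defensive.
Import GRing.Theory.
Local Open Scope ring_scope.

Section CayleySum.
Variable A : finZmodType.

Definition is_square (x : A) : bool := [exists y : A, x == y *+ 2].

Definition square_free (T : {set A}) : bool := [forall x in T, ~~ is_square x].

Definition cays_adj (T : {set A}) (x y : A) : bool := (x != y) && (x + y \in T).

Definition closed_nbhd (T : {set A}) (v : A) : {set A} :=
  [set c | (c == v) || cays_adj T v c].

Definition perfect_code (T : {set A}) (C : {set A}) : Prop :=
  forall v : A, #|C :&: closed_nbhd T v| = 1%N.

Definition is_subgroup (H : {set A}) : Prop :=
  0 \in H /\ {in H &, forall x y, x - y \in H}.

Definition subgroup_perfect_code (H : {set A}) : Prop :=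
  is_subgroup H /\ exists T : {set A}, square_free T /\ perfect_code T H.
End CayleySum.

Definition Agrp (n : nat) (B : finZmodType) : Type := ('rV['Z_2]_n * 'Z_4 * B)%type.
HB.instance Definition _ n B := GRing.Zmodule.on (Agrp n B).
HB.instance Definition _ n B := Finite.on (Agrp n B).

(* The doubles 2A of a finite abelian group A form a subgroup. A subgroup H is
   a perfect code of some CayS(A, T) with T square-free exactly when every coset
   v + H other than H contains a non-square: T is then a set of representatives
   of these cosets chosen among the non-squares, since the neighbours of v lying
   in H are the c in H with v + c in T. A coset v + H lies inside 2A iff v lies
   in 2A and H <= 2A, so H is a subgroup perfect code iff H is not a proper
   subgroup of 2A. For A = Z_2^n x Z_4 x A_2' we have 2A = 0 x {0,2} x A_2', and
   a subgroup of 2A is the product of its Z_4-part and its A_2'-part (multiply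
   by the odd order |A_2'|); its proper subgroups are the two excluded families. *)

From HB Require Import structures.
From mathcomp Require Import all_boot all_order all_algebra fingroup cyclic.
Local Open Scope ring_scope.
Import GRing.Theory FinRing.Theory.

Set Implicit Arguments.
Unset Strict Implicit.
Unset Printing Implicit Defensive.

Section Squares.
Variable A : finZmodType.

Definition squares : {pred A} := @is_square A.

Lemma mem_squares x : (x \in squares) = is_square x.
Proof. by []. Qed.

Lemma squares_zmod_closed : zmod_closed squares.
Proof.
split; first by rewrite mem_squares; apply/existsP; exists 0; rewrite mul0rn.
move=> x y; rewrite !mem_squares => /existsP[a /eqP->] /existsP[b /eqP->].
by apply/existsP; exists (a - b); rewrite mulrnBl.
Qed.

End Squares.

Arguments squares {A}.

HB.instance Definition _ (A : finZmodType) :=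
  GRing.isZmodClosed.Build A (@squares A) (@squares_zmod_closed A).

Section SubgroupPerfectCode.
Variables (A : finZmodType) (H : {set A}).
Hypothesis sH : is_subgroup H.

#[local] HB.instance Definition _ := GRing.isZmodClosed.Build A (pred_of_set H) sH.

Definition coset_nonsquare (v : A) : option A :=
  [pick u | ~~ is_square u & u - v \in H].

Lemma eq_coset_nonsquare v w : v - w \in H ->
  coset_nonsquare v = coset_nonsquare w.
Proof.
move=> vwH; apply: eq_pick => u /=; congr (_ && _).
by rewrite -(rpredDr (u - v) vwH) addrA subrK.
Qed.

Definition nonsquare_transversal : {set A} :=
  [set u | (u \notin H) && (coset_nonsquare u == Some u)].

Lemma nonsquare_transversal_square_free : square_free nonsquare_transversal.
Proof.
apply/forallP => u; apply/implyP; rewrite inE /coset_nonsquare => /andP[_ /eqP].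
by case: pickP => // w /andP[nsq_w _] [<-].
Qed.

Lemma perfect_code_nonsquare_transversal :
  (forall v, v \notin H -> exists2 c, c \in H & ~~ is_square (v + c)) ->
  perfect_code nonsquare_transversal H.
Proof.
move=> nsqH v; apply/eqP/cards1P.
have [vH | vNH] := boolP (v \in H).
  exists v; apply/setP => c; rewrite !inE /cays_adj inE.
  have [-> | _] := eqVneq c v; first by rewrite vH.
  by case cH: (c \in H); rewrite //= rpredD.
have [c cH nsq_vc] := nsqH v vNH.
case def_u: (coset_nonsquare v) => [u|]; last first.
  move: def_u; rewrite /coset_nonsquare; case: pickP => // none _.
  by have := none (v + c); rewrite nsq_vc addrAC subrr add0r cH.
have uvH : u - v \in H.
  by move: def_u; rewrite /coset_nonsquare; case: pickP => // w /andP[_ ?] [<-].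
have uNH : u \notin H.
  by apply: contra vNH => uH; have := rpredB uH uvH; rewrite opprB addrC subrK.
exists (u - v); apply/setP => d; rewrite !inE /cays_adj inE.
apply/idP/eqP => [/andP[dH] | ->].
  have -> : (d == v) = false by apply: contraNF vNH => /eqP <-.
  have vd_vH : v + d - v \in H by rewrite addrAC subrr add0r.
  rewrite /= (eq_coset_nonsquare vd_vH) def_u.
  by case/and3P => _ _ /eqP[->]; rewrite addrAC subrr add0r.
rewrite uvH [v + _]addrC subrK uNH (eq_coset_nonsquare uvH) def_u eqxx /=.
by rewrite andbT eq_sym orbN.
Qed.

Lemma subgroup_perfect_codeP : subgroup_perfect_code H <->
  (forall v, v \notin H -> exists2 c, c \in H & ~~ is_square (v + c)).
Proof.
split=> [[_ [T [sqfT pcT]]] v vNH | nsqH].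
  have /eqP/cards1P[c /setP def_c] := pcT v.
  have := def_c c; rewrite !inE eqxx => /andP[cH].
  case/orP => [/eqP cv | /andP[_ vcT]]; first by rewrite -cv cH in vNH.
  by exists c => //; apply: (implyP (forallP sqfT (v + c))).
split=> //; exists nonsquare_transversal.
by split; [apply: nonsquare_transversal_square_free |
           apply: perfect_code_nonsquare_transversal].
Qed.

Lemma subgroup_perfect_codeE : subgroup_perfect_code H <-> ~~ (H \proper squares).
Proof.
apply: iff_trans subgroup_perfect_codeP _; split=> [nsqH | notproper v vNH].
  apply/negP => /properP[sHS [v vS vNH]].
  have [c cH] := nsqH v vNH.
  by rewrite -mem_squares rpredD // (subsetP sHS).
have [c /andP[cH nsq_vc] | all_sq] := pickP [pred c | (c \in H) && ~~ is_square (v + c)].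
  by exists c.
have vcS c : c \in H -> v + c \in squares.
  by move=> cH; move: (all_sq c); rewrite /= cH mem_squares => /negbFE.
have vS : v \in squares by rewrite -[v]addr0 vcS ?rpred0.
case/negP: notproper; apply/properP; split; last by exists v.
by apply/subsetP => c cH; rewrite -(rpredDl c vS) vcS.
Qed.

End SubgroupPerfectCode.

Lemma mulrn_card (B : finZmodType) (x : B) : x *+ #|B| = 0.
Proof. by rewrite -zmodXgE -cardsT expg_cardG ?inE. Qed.

Lemma odd_card_is_square (B : finZmodType) : odd #|B| -> forall b : B, is_square b.
Proof.
move=> oddB b; apply/existsP; exists (b *+ (#|B|.+1)./2); apply/eqP.
have half2 : ((#|B|.+1)./2 * 2 = #|B|.+1)%N.
  by rewrite muln2 -[RHS]odd_double_half /= oddB.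
by rewrite -mulrnA half2 mulrSr mulrn_card add0r.
Qed.

Lemma Z2_mulrn2 (e : 'Z_2) : e *+ 2 = 0.
Proof. by apply/val_inj; case: e => -[|[|]]. Qed.

Lemma rowZ2_mulrn2 n (e : 'rV['Z_2]_n) : e *+ 2 = 0.
Proof. by apply/matrixP => i j; rewrite mulmxnE Z2_mulrn2 mxE. Qed.

Lemma is_square_Z4 (e : 'Z_4) : is_square e = (e == 0) || (e == 2%:R).
Proof.
apply/existsP/idP => [[y /eqP->] | /orP[] /eqP->]; first by case: y => -[|[|[|[|]]]].
  by exists 0; rewrite mul0rn.
by exists 1.
Qed.

Lemma Z4_2_mulrn_odd m : odd m -> (2%:R : 'Z_4) *+ m = 2%:R.
Proof.
move=> oddm; rewrite -[m]odd_double_half oddm mulrnDr -mul2n mulrnA.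
by rewrite [2%:R *+ 2](_ : _ = 0) ?mul0rn ?addr0 //; apply/eqP.
Qed.

Section Agrp.
Variables (n : nat) (B : finZmodType).
Hypothesis oddB : odd #|B|.
Implicit Types x : Agrp n B.

Definition twos_times (A' : {set B}) : {set Agrp n B} :=
  [set x | (x.1.1 == 0) && ((x.1.2 == 0) || (x.1.2 == 2%:R)) && (x.2 \in A')].

Definition zeros_times (A'' : {set B}) : {set Agrp n B} :=
  [set x | (x.1.1 == 0) && (x.1.2 == 0) && (x.2 \in A'')].

Lemma is_square_AgrpE x :
  is_square x = (x.1.1 == 0) && ((x.1.2 == 0) || (x.1.2 == 2%:R)).
Proof.
rewrite -is_square_Z4.
apply/existsP/andP => [[y /eqP->] | [/eqP x1 /existsP[e /eqP x2]]].
  by rewrite !pairMnE /= rowZ2_mulrn2; split=> //; apply/existsP; exists y.1.2.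
have /existsP[b /eqP x3] := odd_card_is_square oddB x.2.
exists (0, e, b); apply/eqP; rewrite !pairMnE mul0rn -x1 -x2 -x3.
by case: x {x1 x2 x3} => [[]].
Qed.

Lemma square_AgrpE x : x \in squares -> x = (0, x.1.2, 0) + (0, 0, x.2).
Proof.
rewrite mem_squares is_square_AgrpE => /andP[/eqP x1 _].
case: x x1 => [[a e] b] /= ->.
by rewrite -[RHS]/((0 + 0, e + 0, 0 + b) : Agrp n B) !addr0 add0r.
Qed.

Lemma mulrn_card_square x : x \in squares -> x *+ #|B| = (0, x.1.2, 0).
Proof.
rewrite mem_squares is_square_AgrpE => /andP[/eqP x1 x2].
rewrite !pairMnE x1 mul0rn mulrn_card.
by case/orP: x2 => /eqP ->; rewrite ?mul0rn ?Z4_2_mulrn_odd.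
Qed.

Variable H : {set Agrp n B}.
Hypothesis sH : is_subgroup H.

#[local] HB.instance Definition _ :=
  GRing.isZmodClosed.Build (Agrp n B) (pred_of_set H) sH.

Lemma subgroup_of_squares_memE : H \subset squares -> forall x,
  (x \in H) = [&& x \in squares, (0, x.1.2, 0) \in H & (0, 0, x.2) \in H].
Proof.
move=> HS x; apply/idP/and3P => [xH | [xS eH bH]]; last first.
  by rewrite (square_AgrpE xS) rpredD.
have xS := subsetP HS x xH.
have eH : (0, x.1.2, 0) \in H by rewrite -mulrn_card_square // rpredMn.
split=> //; have := rpredB xH eH.
by rewrite [X in X - _](square_AgrpE xS) addrAC subrr add0r.
Qed.

Lemma Z4_part_mem (e : 'Z_4) : (e == 0) || (e == 2%:R) ->
  ((0, e, 0) \in H) = (e == 0) || ((0, 2%:R, 0) \in H).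
Proof. by case/orP => /eqP->; rewrite ?rpred0. Qed.

Definition B_part : {set B} := [set b | (0, 0, b) \in H].

Lemma B_part_subgroup : is_subgroup B_part.
Proof.
split=> [|a b]; rewrite !inE ?rpred0 // => aH bH; have := rpredB aH bH.
by rewrite -[X in X \in H]/((0 - 0, 0 - 0, a - b) : Agrp n B) !subrr.
Qed.

Lemma subgroup_of_squaresE : H \subset squares ->
  H = if (0, 2%:R, 0) \in H then twos_times B_part else zeros_times B_part.
Proof.
move=> HS; apply/setP => x; rewrite subgroup_of_squares_memE // mem_squares.
rewrite is_square_AgrpE; case: ifP => two_H; rewrite !inE; case: (x.1.1 == 0) => //=.
  by case x2: ((x.1.2 == 0) || (x.1.2 == 2%:R)); rewrite //= Z4_part_mem // two_H orbT.
case x2: ((x.1.2 == 0) || (x.1.2 == 2%:R)) => /=.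
  by rewrite Z4_part_mem // two_H orbF.
by case/norP: (negbT x2) => /negbTE->.
Qed.

Lemma proper_squares_AgrpP : H \proper squares <->
  (exists A' : {set B}, is_subgroup A' /\ A' != [set: B] /\ H = twos_times A')
  \/ (exists A'' : {set B}, is_subgroup A'' /\ H = zeros_times A'').
Proof.
split=> [/properP[HS [v vS vNH]] | ].
  have sB := B_part_subgroup.
  have := subgroup_of_squaresE HS; case: ifP => _ HE; last by right; exists B_part.
  left; exists B_part; do 2!split=> //.
  apply: contraNneq vNH => B_partT.
  by rewrite HE B_partT inE in_setT andbT -is_square_AgrpE.
case=> [[A' [_ [A'T ->]]] | [A'' [_ ->]]]; apply/properP; split.
- by apply/subsetP => x; rewrite inE mem_squares is_square_AgrpE => /andP[].
- move: A'T; rewrite -properT => /properP[_ [b _ bNA']].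
  have bS : ((0, 0, b) : Agrp n B) \in squares.
    by rewrite mem_squares is_square_AgrpE !eqxx.
  by exists (0, 0, b); rewrite // inE /= eqxx.
- apply/subsetP => x; rewrite inE mem_squares is_square_AgrpE.
  by case/andP => /andP[-> ->].
- have twoS : ((0, 2%:R, 0) : Agrp n B) \in squares.
    by rewrite mem_squares is_square_AgrpE eqxx orbT.
  by exists (0, 2%:R, 0); rewrite // inE /= (_ : 2%:R == 0 = false) ?andbF.
Qed.

End Agrp.

Theorem proposition3p11 (n : nat) (B : finZmodType) (hn : (1 <= n)%N) (hB : odd #|B|)
  (H : {set Agrp n B}) :
  is_subgroup H ->
  (subgroup_perfect_code H <->
   ~ (exists A' : {set B}, is_subgroup A' /\ A' != [set: B] /\
        H = [set x | (x.1.1 == 0) && ((x.1.2 == 0) || (x.1.2 == 2%:R)) && (x.2 \in A')])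
   /\ ~ (exists A'' : {set B}, is_subgroup A'' /\
        H = [set x | (x.1.1 == 0) && (x.1.2 == 0) && (x.2 \in A'')])).
Proof.
(* [hn] is not needed: the description also holds for n = 0. *)
move=> sH; apply: iff_trans (subgroup_perfect_codeE sH) _.
have forms := proper_squares_AgrpP hB sH.
split=> [/negP not_proper | [no_form1 no_form2]].
  by split=> [form1 | form2]; apply: not_proper; apply/forms; [left | right].
by apply/negP => /forms[].
Qed.
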